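(* For all $x\in[0,\infty)$, $$0\le\lim_{k\to\infty}\left|\frac{x\,\mathcal{P}_{k+1}(x)}{\mathcal{P}_k(x)}\right|\le 2,$$ where $\mathcal{P}_k(x)={}_2F_1\!\left(\frac{k}{2},\frac{k+1}{2};\frac{2k+3}{2};-x^2\right)$.
   Context: ${}_2F_1(a,b;c;z)$ denotes the Gauss hypergeometric function. *)

From Stdlib Require Import Reals Lra Factorial.
From Coquelicot Require Import Coquelicot.
Open Scope R_scope.

Fixpoint poch (a : R) (n : nat) : R :=
  match n with
  | O => 1
  | S m => poch a m * (a + INR m)
  end.

Definition hyp2f1_series (a b c z : R) : R :=
  Series (fun n => poch a n * poch b n / (poch c n * INR (fact n)) * z ^ n).

(* For |z| < 1 it is the power series; for z <= -1 it is
   the analytic continuation, given by the Pfaff transformation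
   2F1(a,b;c;z) = (1-z)^(-a) 2F1(a,c-b;c;z/(z-1)), with z/(z-1) in [1/2,1).
   Outside z < 1 the value is irrelevant here and set to 0. *)
Definition hyp2f1 (a b c z : R) : R :=
  if Rlt_dec (Rabs z) 1 then hyp2f1_series a b c z
  else if Rle_dec z (-1) then
    Rpower (1 - z) (- a) * hyp2f1_series a (c - b) c (z / (z - 1))
  else 0.

Definition Pk (k : nat) (x : R) : R :=
  hyp2f1 (INR k / 2) ((INR k + 1) / 2) ((2 * INR k + 3) / 2) (- x ^ 2).

(* Euler's integral turns P_k(x) into a ratio of moments on [0, pi/2]: with
   h(t) = sin t cos t / sqrt (1 + x^2 cos^2 t),
     P_k(x) = (int sin t h(t)^k dt) / (int sin t (sin t cos t)^k dt)
   (for x >= 1 via the Pfaff transformation through which 2F1 is defined there).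
   Moments of a nonnegative function are log-convex by Cauchy-Schwarz, so ratios of
   consecutive moments increase to a limit bounded by sup h <= 1/x.  For the denominator
   that limit is 1/2: the one-step ratio is a quotient of Gamma values, but Wallis'
   recursion makes the two-step ratio rational, tending to 1/4.  Hence
   x P_(k+1)(x) / P_k(x) tends to 2 x lambda with lambda <= 1/x. *)

From Stdlib Require Import Reals Lra Lia Factorial.
From Coquelicot Require Import Coquelicot.
Open Scope R_scope.

Lemma scalR (x y : R) : scal x y = x * y.
Proof. reflexivity. Qed.

(* Coquelicot states equalities at its structure carriers, where ring and lra fail. *)
Ltac real_eq := match goal with |- ?A = ?B => change (@eq R A B) end.

Ltac RInt_ext_pointwise := apply RInt_ext; intros ?t _; real_eq.

Ltac solve_continuous :=
  apply (ex_derive_continuous (K := R_AbsRing) (V := R_NormedModule)); auto_derive.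

Ltac solve_ex_RInt :=
  apply (ex_RInt_continuous (V := R_CompleteNormedModule)); intros ? _; solve_continuous.

Lemma is_RInt_sum_n (f : nat -> R -> R) (a b : R) (N : nat) :
  (forall n, ex_RInt (f n) a b) ->
  is_RInt (fun t => sum_n (fun n => f n t) N) a b (sum_n (fun n => RInt (f n) a b) N).
Proof.
  intros Hf. induction N as [|N IH].
  - rewrite sum_O. apply (is_RInt_ext (f 0%nat)).
    + intros t _. now rewrite sum_O.
    + apply (RInt_correct (V := R_CompleteNormedModule)), Hf.
  - rewrite sum_Sn. apply (is_RInt_ext (fun t => plus (sum_n (fun n => f n t) N) (f (S N) t))).
    + intros t _. now rewrite sum_Sn.
    + apply (is_RInt_plus (V := R_CompleteNormedModule)); [exact IH |].
      apply (RInt_correct (V := R_CompleteNormedModule)), Hf.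
Qed.

Lemma is_series_tail (u : nat -> R) (s : R) (N : nat) :
  is_series u s -> is_series (fun k => u (S N + k)%nat) (s - sum_n u N).
Proof.
  intros Hu. apply (is_series_incr_n u (S N)); [lia|]. simpl pred.
  match goal with |- is_series _ ?l => replace l with s; [exact Hu|] end.
  unfold plus; simpl. change (s = s - sum_n u N + sum_n u N). ring.
Qed.

Lemma series_tail_le (u m : nat -> R) (s : R) (N : nat) :
  is_series u s -> ex_series m -> (forall n, Rabs (u n) <= m n) ->
  Rabs (s - sum_n u N) <= Series m - sum_n m N.
Proof.
  intros Hu Hm Hle.
  assert (Hmt := is_series_tail m _ N (Series_correct m Hm)).
  rewrite <- (is_series_unique _ _ (is_series_tail u s N Hu)), <- (is_series_unique _ _ Hmt).
  assert (Hut : ex_series (fun k => Rabs (u (S N + k)%nat))).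
  { apply (ex_series_le (V := R_CompleteNormedModule) _ (fun k => m (S N + k)%nat));
      [|eexists; exact Hmt].
    intros k. unfold norm; simpl. unfold abs; simpl. rewrite Rabs_Rabsolu. apply Hle. }
  eapply Rle_trans; [apply Series_Rabs, Hut|].
  apply Series_le; [|eexists; exact Hmt].
  intros k. split; [apply Rabs_pos | apply Hle].
Qed.

Lemma is_series_RInt (f : nat -> R -> R) (F : R -> R) (m : nat -> R) (a b : R) :
  a <= b -> (forall n, ex_RInt (f n) a b) -> ex_RInt F a b ->
  (forall n t, a <= t <= b -> Rabs (f n t) <= m n) -> ex_series m ->
  (forall t, a <= t <= b -> is_series (fun n => f n t) (F t)) ->
  is_series (fun n => RInt (f n) a b) (RInt F a b).
Proof.
  intros Hab Hf HF Hm Hms HS.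
  set (S N := sum_n (fun n => RInt (f n) a b) N).
  set (T N := Series m - sum_n m N).
  assert (HT : is_lim_seq (fun N => (b - a) * T N) 0).
  { replace (Finite 0) with (Rbar_mult (b - a) (Series m - Series m))
      by (simpl; f_equal; ring).
    apply is_lim_seq_scal_l, is_lim_seq_minus';
      [apply is_lim_seq_const | apply Series_correct, Hms]. }
  assert (Hdist : forall N, Rabs (RInt F a b - S N) <= (b - a) * T N).
  { intros N. assert (HSN := is_RInt_sum_n f a b N Hf).
    unfold S. rewrite <- (is_RInt_unique _ _ _ _ HSN).
    change (Rabs (minus (RInt F a b) (RInt (fun t => sum_n (fun n => f n t) N) a b))
      <= (b - a) * T N).
    rewrite <- RInt_minus by (auto; eexists; exact HSN).
    apply abs_RInt_le_const; [exact Hab | apply ex_RInt_minus; [exact HF | eexists; exact HSN] |].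
    intros t Ht. apply series_tail_le; auto. }
  assert (H0 : is_lim_seq (fun N => RInt F a b - S N) 0).
  { apply is_lim_seq_abs_0, (is_lim_seq_le_le (fun _ => 0) _ (fun N => (b - a) * T N));
      [|apply is_lim_seq_const | exact HT].
    intros N. split; [apply Rabs_pos | apply Hdist]. }
  change (is_lim_seq S (RInt F a b)).
  apply (is_lim_seq_ext (fun N => RInt F a b - (RInt F a b - S N))); [intros N; ring|].
  replace (Finite (RInt F a b)) with (Rbar_minus (RInt F a b) 0) by (simpl; f_equal; ring).
  apply is_lim_seq_minus'; [apply is_lim_seq_const | exact H0].
Qed.

Lemma RInt_reflect (f : R -> R) (a b : R) :
  ex_RInt f a b -> RInt (fun t => f (a + b - t)) a b = RInt f a b.
Proof.
  intros Hf.
  assert (Hf' : ex_RInt f (-1 * a + (a + b)) (-1 * b + (a + b)))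
    by (replace (-1 * a + (a + b)) with b by ring; replace (-1 * b + (a + b)) with a by ring;
        now apply ex_RInt_swap).
  assert (Hopp : ex_RInt (fun t => - f (a + b - t)) a b).
  { apply (ex_RInt_ext (fun t => scal (-1) (f (-1 * t + (a + b)))));
      [|exact (ex_RInt_comp_lin f _ _ a b Hf')].
    intros t _. rewrite scalR. replace (-1 * t + (a + b)) with (a + b - t) by ring.
    real_eq; ring. }
  rewrite (RInt_ext _ (fun t => opp (- f (a + b - t)))) by (intros; unfold opp; simpl; ring).
  rewrite (RInt_opp (V := R_CompleteNormedModule)) by exact Hopp.
  rewrite (RInt_ext _ (fun y => scal (-1) (f (-1 * y + (a + b))))).
  2: { intros t _. rewrite scalR. replace (-1 * t + (a + b)) with (a + b - t) by ring.
       real_eq; ring. }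
  rewrite (RInt_comp_lin (V := R_CompleteNormedModule)) by exact Hf'.
  replace (-1 * a + (a + b)) with b by ring. replace (-1 * b + (a + b)) with a by ring.
  rewrite <- (opp_RInt_swap (V := R_CompleteNormedModule)) by exact Hf.
  unfold opp; simpl; ring.
Qed.

Definition Wallis (p q : nat) : R := RInt (fun t => sin t ^ p * cos t ^ q) 0 (PI / 2).

Lemma ex_RInt_sin_cos_pow (p q : nat) (a b : R) : ex_RInt (fun t => sin t ^ p * cos t ^ q) a b.
Proof. solve_ex_RInt; auto. Qed.

Lemma sin_cos_pos (t : R) : 0 < t < PI / 2 -> 0 < sin t /\ 0 < cos t.
Proof.
  intros Ht. split; [apply sin_gt_0 | apply cos_gt_0]; pose proof PI_RGT_0; lra.
Qed.

Lemma Wallis_pos (p q : nat) : 0 < Wallis p q.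
Proof.
  apply RInt_gt_0; [pose proof PI_RGT_0; lra | |].
  - intros t Ht. destruct (sin_cos_pos t Ht). apply Rmult_lt_0_compat; now apply pow_lt.
  - intros t _. solve_continuous; auto.
Qed.

Lemma Wallis_comm (p q : nat) : Wallis p q = Wallis q p.
Proof.
  unfold Wallis. rewrite <- RInt_reflect by apply ex_RInt_sin_cos_pow.
  RInt_ext_pointwise. rewrite Rplus_0_l, sin_shift, cos_shift. ring.
Qed.

Lemma Wallis_cos2 (p q : nat) : Wallis p (S (S q)) = Wallis p q - Wallis (S (S p)) q.
Proof.
  unfold Wallis. rewrite <- (RInt_minus (V := R_CompleteNormedModule)) by apply ex_RInt_sin_cos_pow.
  RInt_ext_pointwise. unfold minus, plus, opp; simpl.
  replace (cos t * (cos t * cos t ^ q)) with ((1 - sin t ^ 2) * cos t ^ q)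
    by (rewrite <- (sin2_cos2 t); unfold Rsqr; ring).
  ring.
Qed.

(* Integrate the derivative of sin^(p+1) cos^(q+1), which vanishes at both ends. *)
Lemma Wallis_rec (p q : nat) :
  (INR p + INR q + 2) * Wallis (S (S p)) q = (INR p + 1) * Wallis p q.
Proof.
  set (F t := sin t ^ S p * cos t ^ S q).
  set (dF t := INR (S p) * (sin t ^ p * cos t ^ S (S q))
               - INR (S q) * (sin t ^ S (S p) * cos t ^ q)).
  assert (HF : is_RInt dF 0 (PI / 2) (minus (F (PI / 2)) (F 0))).
  { apply (is_RInt_derive (V := R_CompleteNormedModule)).
    - intros t _. unfold F, dF. auto_derive; auto. rewrite !S_INR. destruct p, q; simpl; ring.
    - intros t _. unfold dF. solve_continuous; auto. }
  replace (minus (F (PI / 2)) (F 0)) with 0 in HF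
    by (unfold F, minus, plus, opp; simpl; rewrite cos_PI2, sin_0; ring).
  assert (Hval : is_RInt dF 0 (PI / 2)
    (INR (S p) * Wallis p (S (S q)) - INR (S q) * Wallis (S (S p)) q)).
  { apply (is_RInt_minus (V := R_CompleteNormedModule));
      apply (is_RInt_scal (V := R_CompleteNormedModule));
      apply (RInt_correct (V := R_CompleteNormedModule)), ex_RInt_sin_cos_pow. }
  apply (is_RInt_unique (V := R_CompleteNormedModule)) in HF, Hval.
  rewrite HF, Wallis_cos2, !S_INR in Hval. lra.
Qed.

Lemma Wallis_moment (p q n : nat) :
  Wallis (p + 2 * n) q * poch ((INR p + INR q + 2) / 2) n = Wallis p q * poch ((INR p + 1) / 2) n.
Proof.
  induction n as [|n IH]; simpl poch.
  - rewrite Nat.add_0_r. ring.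
  - replace (p + 2 * S n)%nat with (S (S (p + 2 * n))) by lia.
    assert (Hrec := Wallis_rec (p + 2 * n) q).
    replace (INR (p + 2 * n)) with (INR p + 2 * INR n) in Hrec
      by (rewrite plus_INR, mult_INR; simpl; ring).
    transitivity (/ 2 * ((INR p + 2 * INR n + INR q + 2) * Wallis (S (S (p + 2 * n))) q)
                  * poch ((INR p + INR q + 2) / 2) n); [field|].
    rewrite Hrec.
    transitivity (((INR p + 1) / 2 + INR n)
                  * (Wallis (p + 2 * n) q * poch ((INR p + INR q + 2) / 2) n)); [field|].
    rewrite IH. ring.
Qed.

Lemma Wallis_ratio2 (k : nat) :
  Wallis (S (S (S k))) (S (S k))
  = (INR k + 1) * (INR k + 2) / ((2 * INR k + 3) * (2 * INR k + 5)) * Wallis (S k) k.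
Proof.
  assert (H1 := Wallis_rec (S k) (S (S k))).
  assert (H2 := Wallis_rec k (S k)).
  rewrite (Wallis_comm k (S k)) in H2. rewrite (Wallis_comm (S k) (S (S k))) in H1.
  rewrite !S_INR in H1. rewrite !S_INR in H2. pose proof (pos_INR k).
  apply (Rmult_eq_reg_l (2 * INR k + 5)); [|lra].
  replace ((2 * INR k + 5) * Wallis (S (S (S k))) (S (S k)))
    with ((INR k + 1 + (INR k + 1 + 1) + 2) * Wallis (S (S (S k))) (S (S k))) by ring.
  rewrite H1.
  apply (Rmult_eq_reg_l (2 * INR k + 3)); [|lra].
  transitivity ((INR k + 1 + 1) * ((INR k + (INR k + 1) + 2) * Wallis (S (S k)) (S k))); [ring|].
  rewrite H2. field. lra.
Qed.

Lemma poch_pos (a : R) (n : nat) : 0 < a -> 0 < poch a n.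
Proof.
  intros Ha. induction n as [|n IH]; simpl; [lra|].
  apply Rmult_lt_0_compat; [exact IH | pose proof (pos_INR n); lra].
Qed.

Lemma poch_le_succ (a : R) (n : nat) : 0 <= a -> 0 <= poch a n <= poch (a + 1) n.
Proof.
  intros Ha. induction n as [|n IH]; simpl; [lra|]. pose proof (pos_INR n).
  split; [apply Rmult_le_pos; lra | apply Rmult_le_compat; lra].
Qed.

Lemma poch_0_S (n : nat) : poch 0 (S n) = 0.
Proof. induction n as [|n IH]; [simpl; ring | simpl in *; rewrite IH; ring]. Qed.

Definition binom_coef (a : R) (n : nat) : R := poch a n / INR (fact n).

Lemma binom_coef_0 (a : R) : binom_coef a 0 = 1.
Proof. unfold binom_coef; simpl; field. Qed.

Lemma binom_coef_S (a : R) (n : nat) :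
  binom_coef a (S n) * INR (S n) = (a + INR n) * binom_coef a n.
Proof.
  unfold binom_coef. simpl poch. rewrite fact_simpl, mult_INR.
  pose proof (INR_fact_neq_0 n). pose proof (not_0_INR (S n) (Nat.neq_succ_0 n)). field; auto.
Qed.

Lemma binom_coef_pos (a : R) (n : nat) : 0 < a -> 0 < binom_coef a n.
Proof.
  intros Ha. apply Rdiv_lt_0_compat; [now apply poch_pos | apply lt_0_INR, lt_O_fact].
Qed.

Lemma binom_coef_le_succ (a : R) (n : nat) : 0 <= a -> 0 <= binom_coef a n <= binom_coef (a + 1) n.
Proof.
  intros Ha. destruct (poch_le_succ a n Ha). pose proof (lt_0_INR _ (lt_O_fact n)).
  unfold binom_coef. split; [apply Rdiv_le_0_compat; lra|].
  apply Rmult_le_compat_r; [apply Rlt_le, Rinv_0_lt_compat; lra | lra].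
Qed.

Lemma is_lim_seq_inv_succ : is_lim_seq (fun n => / INR (S n)) 0.
Proof.
  apply (is_lim_seq_incr_1 (fun n => / INR n)).
  replace (Finite 0) with (Rbar_inv p_infty) by reflexivity.
  apply is_lim_seq_inv; [apply is_lim_seq_INR | discriminate].
Qed.

(* The ratio of consecutive coefficients is (a + n) / (n + 1) -> 1. *)
Lemma CV_radius_binom_coef (a : R) : 0 < a -> CV_radius (binom_coef a) = 1.
Proof.
  intros Ha. replace (Finite 1) with (Finite (/ 1)) by (f_equal; field).
  apply CV_radius_finite_DAlembert; [intros n; apply Rgt_not_eq, binom_coef_pos, Ha | lra |].
  apply (is_lim_seq_ext (fun n => 1 + (a - 1) * / INR (S n))).
  - intros n. pose proof (binom_coef_S a n). pose proof (binom_coef_pos a n Ha).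
    pose proof (binom_coef_pos a (S n) Ha). pose proof (lt_0_INR (S n) (Nat.lt_0_succ n)).
    rewrite Rabs_pos_eq by (apply Rlt_le, Rdiv_lt_0_compat; auto).
    apply (Rmult_eq_reg_r (INR (S n) * binom_coef a n)); [|apply Rgt_not_eq; nra].
    rewrite S_INR in *. field_simplify; [nra | lra | lra].
  - replace (Finite 1) with (Finite (1 + (a - 1) * 0)) by (f_equal; ring).
    apply is_lim_seq_plus'; [apply is_lim_seq_const |].
    apply is_lim_seq_mult'; [apply is_lim_seq_const | apply is_lim_seq_inv_succ].
Qed.

Lemma binom_ode (a t : R) : 0 < a -> Rabs t < 1 ->
  (1 - t) * PSeries (PS_derive (binom_coef a)) t = a * PSeries (binom_coef a) t.
Proof.
  intros Ha Ht. set (c := binom_coef a).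
  assert (Hr : Rbar_lt (Rabs t) (CV_radius c)) by (unfold c; rewrite CV_radius_binom_coef; auto).
  assert (Hd := ex_pseries_derive c t Hr).
  rewrite Rmult_minus_distr_r, Rmult_1_l, <- PSeries_incr_1.
  rewrite <- PSeries_minus by (auto; apply ex_pseries_incr_1; auto).
  rewrite <- PSeries_scal. apply PSeries_ext. intros n.
  transitivity (INR (S n) * c (S n) - INR n * c n).
  - destruct n; unfold PS_minus, PS_incr_1, PS_derive, plus, opp, zero; simpl; ring.
  - unfold PS_scal, c. rewrite Rmult_comm, binom_coef_S.
    unfold scal; simpl. unfold mult; simpl. ring.
Qed.

Lemma is_derive_binom_normalized (a t : R) : 0 < a -> Rabs t < 1 ->
  is_derive (fun t => PSeries (binom_coef a) t * Rpower (1 - t) a) t 0.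
Proof.
  intros Ha Ht. assert (Ht' := Rabs_def2 _ _ Ht).
  assert (Hr : Rbar_lt (Rabs t) (CV_radius (binom_coef a)))
    by (rewrite CV_radius_binom_coef by exact Ha; exact Ht).
  assert (Hpow : is_derive (fun t => Rpower (1 - t) a) t (- a * Rpower (1 - t) a / (1 - t))).
  { unfold Rpower. auto_derive; [lra|]. replace (1 + - t) with (1 - t) by ring. field. lra. }
  assert (H := is_derive_mult _ _ t _ _ (is_derive_PSeries _ _ Hr) Hpow Rmult_comm).
  match goal with H : is_derive _ _ ?z |- _ => replace 0 with z; [exact H|] end.
  unfold plus, mult; simpl. unfold mult; simpl.
  set (d := PSeries (PS_derive (binom_coef a)) t). set (P := PSeries (binom_coef a) t).
  transitivity (Rpower (1 - t) a / (1 - t) * ((1 - t) * d - a * P)); [field; lra|].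
  unfold d, P. rewrite binom_ode by assumption. ring.
Qed.

Lemma PSeries_binom_pos (a v : R) : 0 < a -> Rabs v < 1 ->
  PSeries (binom_coef a) v = Rpower (1 - v) (- a).
Proof.
  intros Ha Hv. set (g t := PSeries (binom_coef a) t * Rpower (1 - t) a).
  assert (Hg : g v = g 0).
  { assert (Hv' := Rabs_def2 _ _ Hv).
    assert (Hd : forall t, Rabs t < 1 -> is_derive g t zero)
      by (intros; now apply is_derive_binom_normalized).
    destruct (Rtotal_order v 0) as [Hlt | [-> | Hgt]]; [| reflexivity |].
    - apply eq_is_derive; [|exact Hlt]. intros t Ht. apply Hd, Rabs_def1; lra.
    - symmetry. apply eq_is_derive; [|exact Hgt]. intros t Ht. apply Hd, Rabs_def1; lra. }
  unfold g, Rpower in Hg.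
  rewrite PSeries_0, binom_coef_0, Rminus_0_r, ln_1, Rmult_0_r, exp_0, Rmult_1_l in Hg.
  rewrite Rpower_Ropp. unfold Rpower. assert (0 < exp (a * ln (1 - v))) by apply exp_pos.
  apply (Rmult_eq_reg_r (exp (a * ln (1 - v)))); [|lra]. rewrite Rinv_l; lra.
Qed.

Lemma is_series_binom (a v : R) : 0 <= a -> Rabs v < 1 ->
  is_series (fun n => binom_coef a n * v ^ n) (Rpower (1 - v) (- a)).
Proof.
  intros Ha Hv. destruct (Rle_lt_or_eq_dec 0 a Ha) as [Hpos | <-].
  - rewrite <- PSeries_binom_pos by assumption. apply Series_correct.
    apply (ex_series_Rabs (fun n => binom_coef a n * v ^ n)), CV_disk_inside.
    now rewrite CV_radius_binom_coef.
  - rewrite Ropp_0, Rpower_O by (apply Rabs_def2 in Hv; lra).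
    change (is_lim_seq (sum_n (fun n => binom_coef 0 n * v ^ n)) 1).
    apply (is_lim_seq_ext (fun _ => 1)); [|apply is_lim_seq_const].
    intros N. induction N as [|N IH].
    + rewrite sum_O, binom_coef_0. simpl; ring.
    + rewrite sum_Sn, <- IH. unfold binom_coef. rewrite poch_0_S, Rdiv_0_l.
      unfold plus; simpl. ring.
Qed.

Lemma abs_pow_le_1 (x : R) (n : nat) : Rabs x <= 1 -> Rabs (x ^ n) <= 1.
Proof.
  intros H. rewrite <- RPow_abs, <- (pow1 n). apply pow_incr. split; [apply Rabs_pos | exact H].
Qed.

Lemma abs_sin_cos_pow_le_1 (p q : nat) (t : R) : Rabs (sin t ^ p * cos t ^ q) <= 1.
Proof.
  rewrite Rabs_mult, <- (Rmult_1_l 1).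
  apply Rmult_le_compat; try apply Rabs_pos; apply abs_pow_le_1, Rabs_le;
    [apply SIN_bound | apply COS_bound].
Qed.

Lemma abs_mul_sin2_lt_1 (u t : R) : Rabs u < 1 -> Rabs (u * sin t ^ 2) < 1.
Proof.
  intros Hu. rewrite Rabs_mult.
  assert (Hs : Rabs (sin t ^ 2) <= 1) by (apply abs_pow_le_1, Rabs_le, SIN_bound).
  pose proof (Rabs_pos u). pose proof (Rabs_pos (sin t ^ 2)). nra.
Qed.

Lemma binom_coef_Wallis (a : R) (p q n : nat) :
  binom_coef a n * Wallis (p + 2 * n) q
  = poch a n * poch ((INR p + 1) / 2) n / (poch ((INR p + INR q + 2) / 2) n * INR (fact n))
    * Wallis p q.
Proof.
  assert (Hc : 0 < poch ((INR p + INR q + 2) / 2) n)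
    by (apply poch_pos; pose proof (pos_INR p); pose proof (pos_INR q); lra).
  pose proof (INR_fact_neq_0 n).
  unfold binom_coef. apply (Rmult_eq_reg_r (poch ((INR p + INR q + 2) / 2) n)); [|lra].
  transitivity (poch a n / INR (fact n)
                * (Wallis (p + 2 * n) q * poch ((INR p + INR q + 2) / 2) n)); [ring|].
  rewrite Wallis_moment. field. lra.
Qed.

Lemma binom_sin_cos_term_le (a u t : R) (p q n : nat) : 0 <= a ->
  Rabs (binom_coef a n * u ^ n * (sin t ^ (p + 2 * n) * cos t ^ q))
  <= binom_coef (a + 1) n * Rabs u ^ n.
Proof.
  intros Ha. rewrite !Rabs_mult, <- RPow_abs.
  destruct (binom_coef_le_succ a n Ha). rewrite (Rabs_pos_eq (binom_coef a n)) by assumption.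
  assert (Hsc := abs_sin_cos_pow_le_1 (p + 2 * n) q t). rewrite Rabs_mult in Hsc.
  pose proof (pow_le _ n (Rabs_pos u)).
  apply Rle_trans with (binom_coef a n * Rabs u ^ n * 1).
  - apply Rmult_le_compat_l; [apply Rmult_le_pos|]; assumption.
  - rewrite Rmult_1_r. apply Rmult_le_compat_r; assumption.
Qed.

Lemma is_series_binom_sin2 (a u t : R) (p q : nat) : 0 <= a -> Rabs u < 1 ->
  is_series (fun n => binom_coef a n * u ^ n * (sin t ^ (p + 2 * n) * cos t ^ q))
    (sin t ^ p * cos t ^ q * Rpower (1 - u * sin t ^ 2) (- a)).
Proof.
  intros Ha Hu.
  apply (is_series_ext
    (fun n => scal (sin t ^ p * cos t ^ q) (binom_coef a n * (u * sin t ^ 2) ^ n))).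
  - intros n. rewrite scalR, Rpow_mult_distr, pow_add, pow_mult. real_eq. ring.
  - apply (is_series_scal_l (V := R_NormedModule)), is_series_binom; [exact Ha|].
    now apply abs_mul_sin2_lt_1.
Qed.

(* Expand (1 - u sin^2 t)^(-a) by the binomial series and integrate termwise. *)
Lemma Euler_integral (p q : nat) (a u : R) : 0 <= a -> Rabs u < 1 ->
  hyp2f1_series a ((INR p + 1) / 2) ((INR p + INR q + 2) / 2) u * Wallis p q
  = RInt (fun t => sin t ^ p * cos t ^ q * Rpower (1 - u * sin t ^ 2) (- a)) 0 (PI / 2).
Proof.
  intros Ha Hu.
  assert (Hpos : forall t, 0 < 1 - u * sin t ^ 2)
    by (intros t; apply (abs_mul_sin2_lt_1 u t), Rabs_def2 in Hu; lra).
  set (f n t := binom_coef a n * u ^ n * (sin t ^ (p + 2 * n) * cos t ^ q)).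
  assert (HS : is_series (fun n => RInt (f n) 0 (PI / 2))
    (RInt (fun t => sin t ^ p * cos t ^ q * Rpower (1 - u * sin t ^ 2) (- a)) 0 (PI / 2))).
  { apply (is_series_RInt _ _ (fun n => binom_coef (a + 1) n * Rabs u ^ n)).
    - pose proof PI_RGT_0. lra.
    - intros n. unfold f. solve_ex_RInt; auto.
    - unfold Rpower. solve_ex_RInt. apply Hpos.
    - intros n t _. now apply binom_sin_cos_term_le.
    - eexists. apply is_series_binom; [lra | rewrite Rabs_Rabsolu; exact Hu].
    - intros t _. now apply is_series_binom_sin2. }
  rewrite <- (is_series_unique _ _ HS). unfold hyp2f1_series. rewrite <- Series_scal_r.
  apply Series_ext. intros n. unfold f.
  rewrite (RInt_scal (V := R_CompleteNormedModule)) by apply ex_RInt_sin_cos_pow.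
  fold (Wallis (p + 2 * n) q).
  change (scal (binom_coef a n * u ^ n) (Wallis (p + 2 * n) q))
    with (binom_coef a n * u ^ n * Wallis (p + 2 * n) q).
  real_eq.
  replace (binom_coef a n * u ^ n * Wallis (p + 2 * n) q)
    with (u ^ n * (binom_coef a n * Wallis (p + 2 * n) q)) by ring.
  rewrite binom_coef_Wallis. ring.
Qed.

Definition moment (a b : R) (g h : R -> R) (k : nat) : R := RInt (fun t => g t * h t ^ k) a b.

Section Moments.

Variables (a b : R) (g h : R -> R).
Hypothesis Hab : a <= b.
Hypothesis Hex : forall k, ex_RInt (fun t => g t * h t ^ k) a b.
Hypothesis Hg : forall t, a < t < b -> 0 <= g t.
Hypothesis Hh : forall t, a < t < b -> 0 <= h t.
Hypothesis Hpos : forall k, 0 < moment a b g h k.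

Let J := moment a b g h.

Lemma moment_quadratic_nonneg (mu : R) (k : nat) :
  0 <= J k - 2 * mu * J (S k) + mu ^ 2 * J (S (S k)).
Proof.
  assert (HI : is_RInt
    (fun t => g t * h t ^ k - 2 * mu * (g t * h t ^ S k) + mu ^ 2 * (g t * h t ^ S (S k)))
    a b (J k - 2 * mu * J (S k) + mu ^ 2 * J (S (S k)))).
  { assert (HJ : forall n, is_RInt (fun t => g t * h t ^ n) a b (J n))
      by (intros n; apply (RInt_correct (V := R_CompleteNormedModule)), Hex).
    apply (is_RInt_plus (V := R_CompleteNormedModule)
             (fun t => g t * h t ^ k - 2 * mu * (g t * h t ^ S k))
             (fun t => mu ^ 2 * (g t * h t ^ S (S k)))).
    - apply (is_RInt_minus (V := R_CompleteNormedModule) (fun t => g t * h t ^ k)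
               (fun t => 2 * mu * (g t * h t ^ S k))); [apply HJ |].
      apply (is_RInt_scal (V := R_CompleteNormedModule) (fun t => g t * h t ^ S k)), HJ.
    - apply (is_RInt_scal (V := R_CompleteNormedModule) (fun t => g t * h t ^ S (S k))), HJ. }
  rewrite <- (is_RInt_unique _ _ _ _ HI). apply RInt_ge_0; [exact Hab | eexists; exact HI |].
  intros t Ht.
  replace (g t * h t ^ k - 2 * mu * (g t * h t ^ S k) + mu ^ 2 * (g t * h t ^ S (S k)))
    with (g t * (h t ^ k * (1 - mu * h t) ^ 2)) by (simpl; ring).
  apply Rmult_le_pos; [now apply Hg |].
  apply Rmult_le_pos; [apply pow_le; now apply Hh | apply pow2_ge_0].
Qed.

Lemma moment_log_convex (k : nat) : J (S k) ^ 2 <= J k * J (S (S k)).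
Proof.
  assert (H2 : 0 < J (S (S k))) by apply Hpos.
  assert (H := moment_quadratic_nonneg (J (S k) / J (S (S k))) k).
  apply (Rmult_le_compat_r (J (S (S k)))) in H; [|lra].
  replace ((J k - 2 * (J (S k) / J (S (S k))) * J (S k) + (J (S k) / J (S (S k))) ^ 2 * J (S (S k)))
           * J (S (S k))) with (J k * J (S (S k)) - J (S k) ^ 2) in H by (field; lra).
  lra.
Qed.

Lemma moment_ratio_le_succ (k : nat) : J (S k) / J k <= J (S (S k)) / J (S k).
Proof.
  assert (H := moment_log_convex k).
  assert (H0 : 0 < J k) by apply Hpos. assert (H1 : 0 < J (S k)) by apply Hpos.
  apply (Rmult_le_reg_r (J k * J (S k))); [now apply Rmult_lt_0_compat|].
  replace (J (S k) / J k * (J k * J (S k))) with (J (S k) ^ 2) by (field; lra).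
  replace (J (S (S k)) / J (S k) * (J k * J (S k))) with (J k * J (S (S k))) by (field; lra).
  exact H.
Qed.

Lemma moment_ratio_le (M : R) (k : nat) :
  (forall t, a < t < b -> h t <= M) -> J (S k) / J k <= M.
Proof.
  intros HM. assert (H0 : 0 < J k) by apply Hpos.
  apply (Rmult_le_reg_r (J k)); [exact H0|].
  replace (J (S k) / J k * J k) with (J (S k)) by (field; lra).
  unfold J, moment.
  replace (M * RInt (fun t => g t * h t ^ k) a b) with (RInt (fun t => M * (g t * h t ^ k)) a b)
    by exact (RInt_scal (V := R_CompleteNormedModule) _ a b M (Hex k)).
  apply RInt_le; [exact Hab | apply Hex | |].
  { apply (ex_RInt_scal (V := R_CompleteNormedModule)), Hex. }
  intros t Ht. simpl.
  assert (0 <= g t * h t ^ k) by (apply Rmult_le_pos; [now apply Hg | apply pow_le; now apply Hh]).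
  replace (g t * (h t * h t ^ k)) with (g t * h t ^ k * h t) by ring.
  rewrite (Rmult_comm M). apply Rmult_le_compat_l; [assumption | now apply HM].
Qed.

Lemma moment_ratio_cvg (M : R) : (forall t, a < t < b -> h t <= M) ->
  exists l : R, is_lim_seq (fun k => J (S k) / J k) l /\ 0 < l <= M.
Proof.
  intros HM.
  destruct (ex_finite_lim_seq_incr (fun k => J (S k) / J k) M moment_ratio_le_succ
              (fun k => moment_ratio_le M k HM)) as [l Hl].
  exists l. split; [exact Hl | split].
  - apply Rlt_le_trans with (J 1%nat / J 0%nat).
    + apply Rdiv_lt_0_compat; apply Hpos.
    + exact (is_lim_seq_incr_compare _ l Hl moment_ratio_le_succ 0%nat).
  - exact (is_lim_seq_le _ (fun _ => M) l M (fun k => moment_ratio_le M k HM) Hl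
             (is_lim_seq_const M)).
Qed.

End Moments.

Definition Pk_kernel (x t : R) : R := sin t * cos t * Rpower (1 + x ^ 2 * cos t ^ 2) (-1/2).

Lemma one_plus_sqr_mul_pos (x y : R) : 0 < 1 + x ^ 2 * y ^ 2.
Proof. pose proof (pow2_ge_0 x). pose proof (pow2_ge_0 y). nra. Qed.

Lemma Rpower_neg_half_pow (B : R) (k : nat) :
  0 < B -> Rpower B (- (INR k / 2)) = Rpower B (-1/2) ^ k.
Proof.
  intros HB. rewrite <- Rpower_pow by apply exp_pos. rewrite Rpower_mult. f_equal. field.
Qed.

Lemma sin_Pk_kernel_pow (x t : R) (k : nat) :
  sin t * Pk_kernel x t ^ k
  = sin t ^ S k * cos t ^ k * Rpower (1 + x ^ 2 * cos t ^ 2) (- (INR k / 2)).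
Proof.
  unfold Pk_kernel. rewrite Rpower_neg_half_pow by apply one_plus_sqr_mul_pos.
  rewrite !Rpow_mult_distr. simpl. ring.
Qed.

Lemma ex_RInt_sin_Pk_kernel_pow (x : R) (k : nat) :
  ex_RInt (fun t => sin t * Pk_kernel x t ^ k) 0 (PI / 2).
Proof.
  unfold Pk_kernel, Rpower. solve_ex_RInt. apply one_plus_sqr_mul_pos.
Qed.

Lemma Pk_kernel_pos (x t : R) : 0 < t < PI / 2 -> 0 < Pk_kernel x t.
Proof.
  intros Ht. destruct (sin_cos_pos t Ht).
  unfold Pk_kernel. repeat apply Rmult_lt_0_compat; try assumption. apply exp_pos.
Qed.

Lemma Pk_kernel_le_inv (x t : R) : 0 < x -> 0 < t < PI / 2 -> Pk_kernel x t <= / x.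
Proof.
  intros Hx Ht. destruct (sin_cos_pos t Ht) as [Hs Hc].
  set (B := 1 + x ^ 2 * cos t ^ 2). set (r := Rpower B (-1/2)).
  assert (HB : 0 < B) by apply one_plus_sqr_mul_pos.
  assert (Hr : r ^ 2 * B = 1).
  { unfold r. rewrite <- Rpower_pow by apply exp_pos. rewrite Rpower_mult.
    replace (-1/2 * INR 2) with (- (1)) by (simpl; field).
    rewrite Rpower_Ropp, Rpower_1 by exact HB. field. lra. }
  assert (Hs2 : sin t ^ 2 <= 1) by (pose proof (sin2_cos2 t); unfold Rsqr in *; nra).
  assert (Hxr : x ^ 2 * cos t ^ 2 * r ^ 2 = 1 - r ^ 2) by (unfold B in Hr; nra).
  assert (Hr1 : 0 <= 1 - r ^ 2)
    by (rewrite <- Hxr; apply Rmult_le_pos; [apply Rmult_le_pos|]; apply pow2_ge_0).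
  assert (Hk : 0 <= x * Pk_kernel x t)
    by (apply Rmult_le_pos; [lra | apply Rlt_le, Pk_kernel_pos, Ht]).
  assert (Hsq : (x * Pk_kernel x t) ^ 2 <= 1).
  { change (Pk_kernel x t) with (sin t * cos t * r).
    replace ((x * (sin t * cos t * r)) ^ 2) with (sin t ^ 2 * (x ^ 2 * cos t ^ 2 * r ^ 2)) by ring.
    rewrite Hxr. pose proof (pow2_ge_0 (sin t)). pose proof (pow2_ge_0 r). nra. }
  apply (Rmult_le_reg_l x); [exact Hx|]. rewrite Rinv_r by lra. nra.
Qed.

(* Euler's integral puts sin^2 in the kernel; the reflection t -> pi/2 - t turns it into cos^2. *)
Lemma Pk_moment_small (x : R) (k : nat) : 0 <= x < 1 ->
  Pk k x * Wallis (S k) k = moment 0 (PI / 2) sin (Pk_kernel x) k.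
Proof.
  intros Hx. unfold Pk, hyp2f1.
  assert (Hu : Rabs (- x ^ 2) < 1) by (rewrite Rabs_Ropp, Rabs_pos_eq by apply pow2_ge_0; nra).
  destruct (Rlt_dec (Rabs (- x ^ 2)) 1) as [_ | Hge]; [|contradiction].
  assert (HE := Euler_integral k (S k) (INR k / 2) (- x ^ 2)).
  replace ((INR k + INR (S k) + 2) / 2) with ((2 * INR k + 3) / 2) in HE by (rewrite S_INR; field).
  rewrite Wallis_comm, HE by (auto; pose proof (pos_INR k); lra).
  unfold moment. rewrite <- (RInt_reflect (fun t => sin t * Pk_kernel x t ^ k))
    by apply ex_RInt_sin_Pk_kernel_pow.
  RInt_ext_pointwise. rewrite Rplus_0_l, sin_Pk_kernel_pow, sin_shift, cos_shift.
  replace (1 - - x ^ 2 * sin t ^ 2) with (1 + x ^ 2 * sin t ^ 2) by ring. simpl. ring.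
Qed.

(* For x >= 1 the function is defined through the Pfaff transformation; the prefactor
   (1 + x^2)^(-k/2) merges with the integrand because (1 + x^2)(1 - y sin^2 t) = 1 + x^2 cos^2 t. *)
Lemma Pk_moment_large (x : R) (k : nat) : 1 <= x ->
  Pk k x * Wallis (S k) k = moment 0 (PI / 2) sin (Pk_kernel x) k.
Proof.
  intros Hx. unfold Pk, hyp2f1.
  destruct (Rlt_dec (Rabs (- x ^ 2)) 1) as [Hlt | _].
  { exfalso. rewrite Rabs_Ropp, Rabs_pos_eq in Hlt by apply pow2_ge_0. nra. }
  destruct (Rle_dec (- x ^ 2) (-1)) as [_ | Hnle]; [| exfalso; apply Hnle; nra].
  set (y := - x ^ 2 / (- x ^ 2 - 1)).
  assert (Hy : y = x ^ 2 / (1 + x ^ 2)) by (unfold y; field; nra).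
  assert (Hyabs : Rabs y < 1).
  { rewrite Hy, Rabs_pos_eq by (apply Rdiv_le_0_compat; nra).
    apply (Rmult_lt_reg_r (1 + x ^ 2)); [nra|]. field_simplify; nra. }
  assert (HE := Euler_integral (S k) k (INR k / 2) y).
  replace ((INR (S k) + INR k + 2) / 2) with ((2 * INR k + 3) / 2) in HE by (rewrite S_INR; field).
  replace ((INR (S k) + 1) / 2) with ((2 * INR k + 3) / 2 - (INR k + 1) / 2) in HE
    by (rewrite S_INR; field).
  rewrite Rmult_assoc, HE by (auto; pose proof (pos_INR k); lra).
  assert (Hpos : forall t, 0 < 1 - y * sin t ^ 2)
    by (intros t; apply (abs_mul_sin2_lt_1 y t), Rabs_def2 in Hyabs; lra).
  match goal with |- ?c * RInt ?f _ _ = _ =>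
    transitivity (RInt (fun t => c * f t) 0 (PI / 2));
    [symmetry; apply (RInt_scal (V := R_CompleteNormedModule) f) |] end.
  { unfold Rpower. solve_ex_RInt. apply Hpos. }
  unfold moment. RInt_ext_pointwise. rewrite sin_Pk_kernel_pow.
  rewrite <- Rmult_assoc, (Rmult_comm (Rpower _ _)), Rmult_assoc, Rpower_mult_distr by (auto; nra).
  replace ((1 - - x ^ 2) * (1 - y * sin t ^ 2)) with (1 + x ^ 2 * cos t ^ 2); [ring|].
  rewrite Hy. replace (sin t ^ 2) with (1 - cos t ^ 2)
    by (pose proof (sin2_cos2 t); unfold Rsqr in *; nra).
  field. nra.
Qed.

Lemma Pk_moment (x : R) (k : nat) : 0 <= x ->
  Pk k x = moment 0 (PI / 2) sin (Pk_kernel x) k / Wallis (S k) k.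
Proof.
  intros Hx. pose proof (Wallis_pos (S k) k).
  apply (Rmult_eq_reg_r (Wallis (S k) k)); [|lra].
  unfold Rdiv. rewrite Rmult_assoc, Rinv_l, Rmult_1_r by lra.
  destruct (Rlt_or_le x 1); [apply Pk_moment_small | apply Pk_moment_large]; auto.
Qed.

Lemma moment_sin_Pk_kernel_pos (x : R) (k : nat) : 0 < moment 0 (PI / 2) sin (Pk_kernel x) k.
Proof.
  apply RInt_gt_0; [pose proof PI_RGT_0; lra | |].
  - intros t Ht. apply Rmult_lt_0_compat; [apply sin_cos_pos, Ht | apply pow_lt, Pk_kernel_pos, Ht].
  - intros t _. unfold Pk_kernel, Rpower. solve_continuous. apply one_plus_sqr_mul_pos.
Qed.

Lemma Wallis_moment_sin_cos (k : nat) :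
  Wallis (S k) k = moment 0 (PI / 2) sin (fun t => sin t * cos t) k.
Proof. unfold Wallis, moment. RInt_ext_pointwise. rewrite Rpow_mult_distr. simpl. ring. Qed.

Lemma is_lim_seq_ratio_sqr (u : nat -> R) (l q : R) : (forall k, 0 < u k) ->
  is_lim_seq (fun k => u (S k) / u k) l -> is_lim_seq (fun k => u (S (S k)) / u k) q -> l * l = q.
Proof.
  intros Hu Hl Hq.
  assert (Hprod : is_lim_seq (fun k => u (S k) / u k * (u (S (S k)) / u (S k))) (l * l)).
  { apply is_lim_seq_mult'; [exact Hl | exact (proj1 (is_lim_seq_incr_1 _ _) Hl)]. }
  apply (is_lim_seq_ext _ (fun k => u (S (S k)) / u k)) in Hprod.
  - apply is_lim_seq_unique in Hprod, Hq. rewrite Hprod in Hq. now injection Hq.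
  - intros k. pose proof (Hu k). pose proof (Hu (S k)). field. lra.
Qed.

Lemma is_lim_seq_linear_ratio (a b : R) :
  0 < b -> is_lim_seq (fun k => (INR k + a) / (2 * INR k + b)) (1 / 2).
Proof.
  intros Hb.
  apply (is_lim_seq_ext (fun k => (1 + (a - 1) * / INR (S k)) / (2 + (b - 2) * / INR (S k)))).
  - intros k. pose proof (pos_INR k). rewrite S_INR. field. lra.
  - replace (1 / 2) with ((1 + (a - 1) * 0) / (2 + (b - 2) * 0)) by field.
    apply is_lim_seq_div'; [| | lra];
      (apply is_lim_seq_plus'; [apply is_lim_seq_const |]);
      (apply is_lim_seq_mult'; [apply is_lim_seq_const | apply is_lim_seq_inv_succ]).
Qed.

Lemma Wallis_ratio_cvg : is_lim_seq (fun k => Wallis (S (S k)) (S k) / Wallis (S k) k) (1 / 2).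
Proof.
  assert (HW : forall k, 0 < Wallis (S k) k) by (intros; apply Wallis_pos).
  assert (Hl : exists l : R,
    is_lim_seq (fun k => Wallis (S (S k)) (S k) / Wallis (S k) k) l /\ 0 < l).
  { destruct (moment_ratio_cvg 0 (PI / 2) sin (fun t => sin t * cos t)) with (M := 1)
      as [l [Hl [Hl0 _]]].
    - pose proof PI_RGT_0. lra.
    - intros k. solve_ex_RInt; auto.
    - intros t Ht. apply Rlt_le, sin_cos_pos, Ht.
    - intros t Ht. destruct (sin_cos_pos t Ht). nra.
    - intros k. rewrite <- Wallis_moment_sin_cos. apply HW.
    - intros t Ht. pose proof (SIN_bound t). pose proof (COS_bound t).
      destruct (sin_cos_pos t Ht). nra.
    - exists l. split; [|exact Hl0].
      apply (is_lim_seq_ext (fun k => moment 0 (PI / 2) sin (fun t => sin t * cos t) (S k)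
                                      / moment 0 (PI / 2) sin (fun t => sin t * cos t) k));
        [|exact Hl].
      intros k. now rewrite !Wallis_moment_sin_cos. }
  destruct Hl as [l [Hl Hl0]].
  assert (Hq : is_lim_seq (fun k => Wallis (S (S (S k))) (S (S k)) / Wallis (S k) k)
                          (1 / 2 * (1 / 2))).
  { apply (is_lim_seq_ext
      (fun k => (INR k + 1) / (2 * INR k + 3) * ((INR k + 2) / (2 * INR k + 5)))).
    - intros k. rewrite Wallis_ratio2. pose proof (HW k). pose proof (pos_INR k). field. lra.
    - apply is_lim_seq_mult'; apply is_lim_seq_linear_ratio; lra. }
  assert (Hsq := is_lim_seq_ratio_sqr (fun k => Wallis (S k) k) l _ HW Hl Hq).
  replace (1 / 2) with l by nra. exact Hl.
Qed.

Lemma Pk_ratio_abs (x : R) (k : nat) : 0 <= x ->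
  Rabs (x * Pk (S k) x / Pk k x)
  = x * (moment 0 (PI / 2) sin (Pk_kernel x) (S k) / moment 0 (PI / 2) sin (Pk_kernel x) k)
    / (Wallis (S (S k)) (S k) / Wallis (S k) k).
Proof.
  intros Hx. rewrite !Pk_moment by exact Hx.
  pose proof (moment_sin_Pk_kernel_pos x k). pose proof (moment_sin_Pk_kernel_pos x (S k)).
  pose proof (Wallis_pos (S k) k). pose proof (Wallis_pos (S (S k)) (S k)).
  rewrite Rabs_pos_eq.
  - field. repeat split; lra.
  - apply Rmult_le_pos; [apply Rmult_le_pos; [exact Hx | apply Rlt_le, Rdiv_lt_0_compat; auto] |].
    apply Rlt_le, Rinv_0_lt_compat, Rdiv_lt_0_compat; auto.
Qed.

Theorem lemma3 (x : R) (hx : 0 <= x) :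
  exists L : R,
    is_lim_seq (fun k : nat => Rabs (x * Pk (S k) x / Pk k x)) (Finite L)
    /\ 0 <= L <= 2.
Proof.
  destruct (Rle_lt_or_eq_dec 0 x hx) as [Hx | <-].
  2: { exists 0. split; [|lra]. apply (is_lim_seq_ext (fun _ => 0)); [|apply is_lim_seq_const].
       intros k. rewrite Rmult_0_l, Rdiv_0_l, Rabs_R0. reflexivity. }
  destruct (moment_ratio_cvg 0 (PI / 2) sin (Pk_kernel x)) with (M := / x) as [l [Hl [Hl0 HlM]]].
  - pose proof PI_RGT_0. lra.
  - apply ex_RInt_sin_Pk_kernel_pow.
  - intros t Ht. apply Rlt_le, sin_cos_pos, Ht.
  - intros t Ht. apply Rlt_le, Pk_kernel_pos, Ht.
  - apply moment_sin_Pk_kernel_pos.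
  - intros t Ht. apply Pk_kernel_le_inv; assumption.
  - exists (2 * x * l). split.
    + apply (is_lim_seq_ext _ _ _ (fun k => eq_sym (Pk_ratio_abs x k hx))).
      replace (2 * x * l) with (x * l / (1 / 2)) by field.
      apply is_lim_seq_div'; [apply is_lim_seq_mult'; [apply is_lim_seq_const | exact Hl] | |].
      * apply Wallis_ratio_cvg.
      * lra.
    + apply (Rmult_le_compat_l x) in HlM; [|lra]. rewrite Rinv_r in HlM by lra. nra.
Qed.
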